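(* Let $\mathbf S_1,\dots,\mathbf S_n$ be nice subcategories of shrinkings. Then for every pointed digraph $(G,g)$ and $n\ge0$ the canonical map $$\mathrm{colim}_{(J_1,\dots,J_n)\in\mathbf S_1^{\mathrm{op}}\times\dots\times\mathbf S_n^{\mathrm{op}}}\Big[\bigotimes_{i=1}^n(J_i,\partial J_i),(G,g)\Big]\longrightarrow A_n(G,g)$$ is a bijection. Likewise, for a single nice subcategory $\mathbf S$, the canonical map $\mathrm{colim}_{J\in\mathbf S^{\mathrm{op}}}[(J,\partial J)^{\otimes n},(G,g)]\to A_n(G,g)$ is a bijection.
   Context: Digraphs: vertex sets with arrows $E\subseteq V^2$ containing the diagonal; digraph maps preserve arrows. Box product $G\otimes H$: arrow $(g,h)\to(g',h')$ iff ($g\to g'$, $h=h'$) or ($g=g'$, $h\to h'$). An interval is a digraph on $\{0,\dots,k\}$ whose non-degenerate arrows are exactly one of $i\to i+1$, $i+1\to i$ for each $i<k$; $\partial J=\{0,k\}$. A shrinking is a digraph map of intervals surjective and monotone on vertices; $\mathsf{Shr}$ is the category of all intervals and shrinkings. A nice subcategory of shrinkings is a (not necessarily full) subcategory $\mathbf S\subseteq\mathsf{Shr}$ such that (1) for every interval $J$ there is $J'\in\mathbf S$ and a shrinking $J'\to J$; (2) for $J,J'\in\mathbf S$, if there exists a shrinking $J'\to J$ then there exists a morphism $J'\to J$ in $\mathbf S$. Pairs $(G,H)$ ($H$ an induced subdigraph), maps of pairs, $(G,H)\otimes(G',H')=(G\otimes G',G\otimes H'\cup H\otimes G')$; two pair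 maps are homotopic rel $H$ if joined by a chain of pair maps agreeing on $H$ where consecutive maps satisfy $\varphi_t(x)\to\varphi_{t+1}(x)$ for all $x$ or the reverse for all $x$; $[-,-]$ denotes classes; $(G,g)=(G,\{g\})$. $A_n(G,g)=\mathrm{colim}_{(J_1,\dots,J_n)\in(\mathsf{Shr}^{\mathrm{op}})^n}[\bigotimes_i(J_i,\partial J_i),(G,g)]$, with functoriality by precomposition. *)

From Stdlib Require Import Relations.Relation_Operators.
From mathcomp Require Import all_boot.

Set Implicit Arguments.
Unset Strict Implicit.
Unset Printing Implicit Defensive.

Record digraph := Digraph {
  vtx :> Type;
  arr : vtx -> vtx -> Prop;
  arr_refl : forall x, arr x x }.

(* An interval of length k is encoded by s : seq bool with
   size s = k; its vertices are 0..k, and for i < k the i-th entry tells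
   the orientation of the edge between i and i+1:
   true  <-> i -> i+1,   false <-> i+1 -> i.                           *)
Definition interval := seq bool.

Definition iarr (J : interval) (i j : nat) : bool :=
  [|| i == j,
      (j == i.+1) && nth false J i
    | (i == j.+1) && ~~ nth false J j].

(* A shrinking J' -> J: a map of vertex sets {0..k'} -> {0..k}
   (represented by f : nat -> nat, values outside {0..k'} irrelevant)
   which is a digraph map, surjective and monotone.                    *)
Definition shrinking (J' J : interval) (f : nat -> nat) : Prop :=
  [/\ (forall i, i <= size J' -> f i <= size J),
      (forall j, j <= size J -> exists2 i, i <= size J' & f i = j),
      (forall i j, i <= j -> j <= size J' -> f i <= f j)
    & (forall i j, i <= size J' -> j <= size J' ->
          iarr J' i j -> iarr J (f i) (f j))].

Record subcat := Subcat {
  sobj : interval -> Prop;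
  smor : interval -> interval -> (nat -> nat) -> Prop;
  smor_shr : forall J' J f, smor J' J f -> [/\ sobj J', sobj J & shrinking J' J f];
  smor_ext : forall J' J f f', smor J' J f ->
      (forall i, i <= size J' -> f i = f' i) -> smor J' J f';
  smor_id : forall J, sobj J -> smor J J id;
  smor_comp : forall J'' J' J f h, smor J'' J' f -> smor J' J h ->
      smor J'' J (h \o f) }.

Record nice_subcat := NiceSubcat {
  nsc :> subcat;
  nice1 : forall J, exists2 J', sobj nsc J' & exists f, shrinking J' J f;
  nice2 : forall J J', sobj nsc J -> sobj nsc J' ->
      (exists f, shrinking J' J f) -> exists f, smor nsc J' J f }.

(* Box products of n intervals J : 'I_n -> interval, as pairs
   (J_1 x ... x J_n, boundary).  Vertices are finite functions
   x : 'I_n -> nat with x i <= size (J i) ("valid" points); maps out of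
   the box are functions on {ffun 'I_n -> nat} whose values at invalid
   points are irrelevant (all conditions quantify over valid points).  *)
Definition bvalid n (J : 'I_n -> interval) (x : {ffun 'I_n -> nat}) : Prop :=
  forall i, x i <= size (J i).

Definition boxarr n (J : 'I_n -> interval) (x y : {ffun 'I_n -> nat}) : Prop :=
  x = y \/ exists i, iarr (J i) (x i) (y i) /\ (forall j, j != i -> x j = y j).

(* The subpair of the iterated pair product (J_i, dJ_i): points having
   some coordinate in the boundary {0, k_i}.  (For n = 0 it is empty.) *)
Definition boxbd n (J : 'I_n -> interval) (x : {ffun 'I_n -> nat}) : Prop :=
  exists i, x i = 0 \/ x i = size (J i).

Definition pair_map (G : digraph) (g : G) n (J : 'I_n -> interval)
    (phi : {ffun 'I_n -> nat} -> G) : Prop :=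
  (forall x y, bvalid J x -> bvalid J y -> boxarr J x y -> arr (phi x) (phi y))
  /\ (forall x, bvalid J x -> boxbd J x -> phi x = g).

Definition hstep (G : digraph) (g : G) n (J : 'I_n -> interval)
    (phi psi : {ffun 'I_n -> nat} -> G) : Prop :=
  [/\ pair_map g J phi, pair_map g J psi,
      (forall x, bvalid J x -> boxbd J x -> phi x = psi x)
    & (forall x, bvalid J x -> arr (phi x) (psi x)) \/
      (forall x, bvalid J x -> arr (psi x) (phi x))].

Definition homotopic (G : digraph) (g : G) n (J : 'I_n -> interval) :=
  clos_refl_trans _ (hstep g J).

Definition fmap n (f : 'I_n -> nat -> nat) (x : {ffun 'I_n -> nat})
  : {ffun 'I_n -> nat} := [ffun i => f i (x i)].

(* Colimits over an index category of the functors
   a |-> [ box(tup a), (G,g) ]   (contravariant, by precomposition).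
   A diagram: index objects, their interval tuples, and the morphisms
   a' -> a given as tuples of vertex maps tup a' i -> tup a i.          *)
Record diagram n := Diagram {
  dI : Type;
  dtup : dI -> 'I_n -> interval;
  dobj : dI -> Prop;
  dmor : dI -> dI -> ('I_n -> nat -> nat) -> Prop }.

(* Elements of the disjoint union: (index object, representative map). *)
Definition celem (G : digraph) n (D : diagram n) :=
  (dI D * ({ffun 'I_n -> nat} -> G))%type.

Definition cvalid (G : digraph) (g : G) n (D : diagram n) (e : celem G D) :=
  @dobj n D e.1 /\ pair_map g (@dtup n D e.1) e.2.

Definition cstep (G : digraph) (g : G) n (D : diagram n) (e e' : celem G D) :=
  [/\ cvalid g e, cvalid g e' &
      (e.1 = e'.1 /\ homotopic g (@dtup n D e.1) e.2 e'.2) \/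
      (exists f, @dmor n D e'.1 e.1 f /\
         forall x, bvalid (@dtup n D e'.1) x -> e'.2 x = e.2 (fmap f x))].

(* The colimit is the set of valid elements modulo this equivalence. *)
Definition crel (G : digraph) (g : G) n (D : diagram n) :=
  clos_refl_sym_trans _ (fun e e' : celem G D => cstep g e e').

(* The map induced by an index functor u (on representatives, identity on
   maps) is a bijection of colimits: surjective and injective on classes. *)
Definition canon_bijective (G : digraph) (g : G) n (D1 D2 : diagram n)
    (u : dI D1 -> dI D2) : Prop :=
  (forall e2 : celem G D2, cvalid g e2 ->
     exists2 e1 : celem G D1, cvalid g e1 & crel g (u e1.1, e1.2) e2)
  /\ (forall e1 e1' : celem G D1, cvalid g e1 -> cvalid g e1' ->
        crel g (u e1.1, e1.2) (u e1'.1, e1'.2) -> crel g e1 e1').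

(* Shr^n: the diagram defining A_n(G,g). *)
Definition Shr_diag n : diagram n :=
  @Diagram n ('I_n -> interval) id (fun _ => True)
    (fun J' J f => forall i, shrinking (J' i) (J i) (f i)).

Definition prod_diag n (S : 'I_n -> nice_subcat) : diagram n :=
  @Diagram n ('I_n -> interval) id (fun J => forall i, sobj (S i) (J i))
    (fun J' J f => forall i, smor (S i) (J' i) (J i) (f i)).

Definition diag_diag n (S : nice_subcat) : diagram n :=
  @Diagram n interval (fun J _ => J) (sobj S)
    (fun J' J f => exists2 f0, smor S J' J f0 & forall i, f i = f0).

From Stdlib Require Import Relations.Relation_Operators.
From mathcomp Require Import all_boot zify.

Set Implicit Arguments.
Unset Strict Implicit.
Unset Printing Implicit Defensive.

(* Any two shrinkings K -> J are joined by a chain of elementary homotopies: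
   scanning K edge by edge, where one map collapses an edge that the other
   maps onto the next edge of J, advancing the collapse moves the first map by
   at most one arrow of J.  Precomposing a pair map with two shrinkings of
   boxes therefore gives homotopic maps, changing one coordinate at a time.
   Consequently a subdiagram of Shr^n that is cofinal and codirected computes
   the same colimit: every element of A_n is represented by restricting along
   a shrinking to an object of the subdiagram, any two representatives are
   related, and the generating relation of A_n lifts to representatives.
   Both S_1 x ... x S_n and the diagonal of S are such subdiagrams, because
   concatenation provides a common refinement of finitely many intervals. *)

Section Shrinkings.

Implicit Types (K L J : interval) (s t : nat -> nat).

Definition shrinking_steps K J s : Prop :=
  [/\ s 0 = 0, s (size K) = size J &
      forall x, x < size K -> s x.+1 = s x \/
        (s x.+1 = (s x).+1 /\ nth false K x = nth false J (s x))].

Lemma shrinking_steps_homo K J s :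
  shrinking_steps K J s -> forall i j, i <= j -> j <= size K -> s i <= s j.
Proof.
case=> _ _ step i j; elim: j => [|j IHj] le_ij le_jK; first by case: i le_ij.
rewrite leq_eqVlt in le_ij; case/orP: le_ij => [/eqP-> //|lt_ij].
have := IHj lt_ij (ltnW le_jK); have [->|[-> _]] := step j le_jK; lia.
Qed.

Lemma shrinking_of_steps K J s : shrinking_steps K J s -> shrinking K J s.
Proof.
move=> stepsK; have homo := shrinking_steps_homo stepsK.
case: stepsK => s0 sK step; split=> [i iK | | | i j iK jK].
- by rewrite -sK; apply: homo.
- suff onto x : x <= size K -> forall y, y <= s x -> exists2 i, i <= x & s i = y.
    by move=> j jJ; have [|i le_iK <-] := onto _ (leqnn _) j; [rewrite sK|exists i].
  elim: x => [|x IHx] xK y ys; first by exists 0 => //; rewrite s0 in ys; lia.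
  have [le_ys|lt_sy] := leqP y (s x).
    by have [i ? ?] := IHx (ltnW xK) y le_ys; exists i => //; lia.
  by exists x.+1 => //; have [|[]] := step x xK; lia.
- exact: homo.
- rewrite /iarr; case/or3P=> [/eqP->|/andP[/eqP Ej Ki]|/andP[/eqP Ei Kj]]; subst.
  + by rewrite eqxx.
  + have [->|[-> <-]] := step i jK; first by rewrite eqxx.
    by rewrite Ki eqxx orbT.
  + have [->|[-> <-]] := step j iK; first by rewrite eqxx.
    by rewrite Kj eqxx !orbT.
Qed.

Lemma steps_of_shrinking K J s : shrinking K J s -> shrinking_steps K J s.
Proof.
case=> bounded onto homo arrows.
have s0 : s 0 = 0.
  by have [i iK si] := onto 0 (leq0n _); have := homo 0 i (leq0n _) iK; lia.
have sK : s (size K) = size J.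
  have [i iK si] := onto _ (leqnn _).
  by have := homo i _ iK (leqnn _); have := bounded _ (leqnn (size K)); lia.
split=> // x xK; have := homo x x.+1 (leqnSn _) xK.
case Kx: (nth false K x).
- have := arrows x x.+1 (ltnW xK) xK; rewrite /iarr eqxx Kx /= => /(_ (orbT _)).
  case/or3P=> [/eqP<-|/andP[/eqP-> ->]|/andP[/eqP-> _]]; [by left|by right|lia].
- have := arrows x.+1 x xK (ltnW xK); rewrite /iarr eqxx Kx /= orbT => /(_ (orbT _)).
  case/or3P=> [/eqP->|/andP[/eqP-> _]|/andP[/eqP-> Jx]]; [by left|lia|].
  by right; move: Jx; case: (nth false J (s x)).
Qed.

Lemma shrinking_comp K L J f h :
  shrinking K L f -> shrinking L J h -> shrinking K J (h \o f).
Proof.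
case=> bf ontof homof arrf [bh ontoh homoh arrh].
split=> [i iK | j jJ | i j ij jK | i j iK jK a] /=.
- exact: bh (bf i iK).
- by have [l lL <-] := ontoh j jJ; have [i iK <-] := ontof l lL; exists i.
- exact: homoh (homof i j ij jK) (bf j jK).
- exact: arrh (bf i iK) (bf j jK) (arrf i j iK jK a).
Qed.

Lemma shrinking_id J : shrinking J J id.
Proof. by split=> // j jJ; exists j. Qed.

Lemma shrinking_catl K J : shrinking (K ++ J) K (minn ^~ (size K)).
Proof.
apply: shrinking_of_steps; split; rewrite ?size_cat ?min0n //; first lia.
move=> x _; have [xK|xK] := ltnP x (size K); last by left; lia.
by right; rewrite nth_cat xK; split=> //; lia.
Qed.

Lemma shrinking_catr K J : shrinking (K ++ J) J (subn ^~ (size K)).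
Proof.
apply: shrinking_of_steps; split; rewrite ?size_cat ?sub0n //; first lia.
move=> x _; have [xK|xK] := ltnP x (size K); first by left; lia.
by right; rewrite nth_cat ltnNge xK /=; split; lia.
Qed.

Lemma common_refinement (Js : seq interval) :
  exists L, forall J, J \in Js -> exists f, shrinking L J f.
Proof.
elim: Js => [|J0 Js [L refL]]; first by exists [::].
exists (J0 ++ L) => J; rewrite inE => /predU1P[->|JJs].
  by exists (minn ^~ (size J0)); apply: shrinking_catl.
have [f Lf] := refL J JJs; exists (f \o subn ^~ (size J0)).
exact: shrinking_comp (shrinking_catr J0 L) Lf.
Qed.

End Shrinkings.

Section ShrinkingHomotopy.

Variables K J : interval.
Implicit Types s t : nat -> nat.

Definition shr_hstep s t : Prop :=
  [/\ shrinking K J s, shrinking K J t &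
      (forall x, x <= size K -> iarr J (s x) (t x)) \/
      (forall x, x <= size K -> iarr J (t x) (s x))].

Definition shr_homotopic := clos_refl_trans _ shr_hstep.

Lemma shr_hstep_sym s t : shr_hstep s t -> shr_hstep t s.
Proof. by case=> Hs Ht [arr_st|arr_ts]; split=> //; [right|left]. Qed.

Lemma shr_homotopic_sym s t : shr_homotopic s t -> shr_homotopic t s.
Proof.
elim=> [u v /shr_hstep_sym|u|u v w _ IHuv _ IHvw]; [exact: rt_step|exact: rt_refl|].
exact: rt_trans IHvw IHuv.
Qed.

Lemma shr_hstep_eq s t : shrinking K J s -> shrinking K J t ->
  (forall x, x <= size K -> s x = t x) -> shr_hstep s t.
Proof. by move=> Hs Ht Est; split=> //; left=> x xK; rewrite Est // /iarr eqxx. Qed.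

Lemma shr_hstep_advance t p :
  shrinking K J t -> p < size K -> t p.+1 = t p -> t p < size J ->
  nth false K p = nth false J (t p) ->
  exists2 t', shr_hstep t t' & (forall x, x <= p -> t' x = t x) /\ t' p.+1 = (t p).+1.
Proof.
move=> Ht pK tp tpJ Kp; have [_ _ homo _] := Ht; have [t0 tK step] := steps_of_shrinking Ht.
set v := t p.
(* [t'] equals [t] up to [p] and never falls below [v.+1] afterwards; it moves each
   vertex at most along the single edge between [v] and [v.+1] of [J]. *)
pose t' x := if p < x then maxn (t x) v.+1 else t x.
have moved x : x <= size K -> t' x = t x \/ (t x = v /\ t' x = v.+1).
  move=> xK; rewrite /t'; case: ifP => px; last by left.
  have := homo p x (ltnW px) xK; rewrite -/v => vx.
  have [vx'|vx'] := leqP v.+1 (t x); [left|right]; lia.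
have Ht' : shrinking K J t'.
  apply: shrinking_of_steps; split=> [|| x xK]; rewrite /t' //.
    by rewrite (leq_trans _ pK) // tK; lia.
  have [px|px] := ltnP p x.
    have -> : p < x.+1 by lia.
    have := homo p x (ltnW px) (ltnW xK).
    have [->|[-> KE]] := step x xK; first by left.
    have [vx|vx] := leqP v.+1 (t x); [right; rewrite !(maxn_idPl _) //|left]; lia.
  have [->|ne_xp] := eqVneq x p; first by rewrite ltnSn tp; right; split=> //; lia.
  have -> : (p < x.+1) = false by lia.
  exact: step.
exists t'; last by split=> [x xp|]; rewrite /t'; [rewrite ltnNge xp | rewrite ltnSn tp; lia].
split=> //; case Jv: (nth false J v); [left|right] => x xK; rewrite /iarr;
  (have [->|[-> ->]] := moved x xK; first by rewrite eqxx); by rewrite Jv eqxx /= ?orbT.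
Qed.

Lemma shr_homotopic_agree d : forall m s t, size K = m + d ->
  shrinking K J s -> shrinking K J t -> (forall x, x <= m -> s x = t x) ->
  shr_homotopic s t.
Proof.
elim: d => [|d IHd] m s t Km Hs Ht Est.
  by apply/rt_step/shr_hstep_eq => // x xK; apply: Est; lia.
have lt_mK : m < size K by lia.
have Km' : size K = m.+1 + d by lia.
have agree_next s' t' : (forall x, x <= m -> s' x = t' x) -> s' m.+1 = t' m.+1 ->
    forall x, x <= m.+1 -> s' x = t' x.
  by move=> E E1 x; rewrite leq_eqVlt => /predU1P[->|] //; apply: E.
have advance s' t' : shrinking K J s' -> shrinking K J t' ->
    (forall x, x <= m -> s' x = t' x) -> s' m.+1 = s' m -> t' m.+1 = (t' m).+1 ->
    nth false K m = nth false J (t' m) -> shr_homotopic s' t'.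
  move=> Hs' Ht' E Ss Tt KTt; have [bt _ _ _] := Ht'.
  have Em := E m (leqnn m).
  have smJ : s' m < size J by have := bt _ lt_mK; rewrite Tt Em.
  have [s'' st [E' Ejump]] := shr_hstep_advance Hs' lt_mK Ss smJ (etrans KTt (congr1 _ (esym Em))).
  apply: (rt_trans _ _ _ s''); first exact: rt_step.
  have [_ Hs'' _] := st; apply: IHd Km' Hs'' Ht' _.
  by apply: agree_next => [x xm|]; [rewrite E' ?E | rewrite Ejump Em Tt].
have [_ _ sstep] := steps_of_shrinking Hs; have [_ _ tstep] := steps_of_shrinking Ht.
have Em := Est m (leqnn m).
have [Ss|[Ss KSs]] := sstep m lt_mK; have [Tt|[Tt KTt]] := tstep m lt_mK.
- by apply: IHd Km' Hs Ht _; apply: agree_next; rewrite // Ss Tt.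
- exact: advance.
- by apply/shr_homotopic_sym/advance => // x xm; rewrite Est.
- by apply: IHd Km' Hs Ht _; apply: agree_next; rewrite // Ss Tt Em.
Qed.

Lemma shr_homotopic_all s t : shrinking K J s -> shrinking K J t -> shr_homotopic s t.
Proof.
move=> Hs Ht; apply: (@shr_homotopic_agree (size K) 0) => // x; rewrite leqn0 => /eqP->.
by have [-> _ _] := steps_of_shrinking Hs; have [-> _ _] := steps_of_shrinking Ht.
Qed.

End ShrinkingHomotopy.

Section Boxes.

Variables (G : digraph) (g : G) (n : nat).
Implicit Types (K L J : 'I_n -> interval) (f h : 'I_n -> nat -> nat).
Implicit Types (x y : {ffun 'I_n -> nat}) (phi psi : {ffun 'I_n -> nat} -> G).

Definition shrinkings K J f := forall i, shrinking (K i) (J i) (f i).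

Lemma shrinkings_id J : shrinkings J J (fun _ => id).
Proof. by move=> i; apply: shrinking_id. Qed.

Lemma shrinkings_comp K L J f h :
  shrinkings K L f -> shrinkings L J h -> shrinkings K J (fun i => h i \o f i).
Proof. by move=> Kf Lh i; apply: shrinking_comp. Qed.

Lemma fmapE f x i : fmap f x i = f i (x i).
Proof. by rewrite ffunE. Qed.

Lemma fmap_comp f h x : fmap f (fmap h x) = fmap (fun i => f i \o h i) x.
Proof. by apply/ffunP=> i; rewrite !fmapE. Qed.

Lemma fmap_id x : fmap (fun _ => id) x = x.
Proof. by apply/ffunP=> i; rewrite fmapE. Qed.

Lemma eq_fmap f h : (forall i, f i =1 h i) -> fmap f =1 fmap h.
Proof. by move=> Efh x; apply/ffunP=> i; rewrite !fmapE Efh. Qed.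

Lemma bvalid_fmap K J f x : shrinkings K J f -> bvalid K x -> bvalid J (fmap f x).
Proof. by move=> Kf Vx i; rewrite fmapE; have [bounded _ _ _] := Kf i; apply: bounded. Qed.

Lemma boxbd_fmap K J f x : shrinkings K J f -> boxbd K x -> boxbd J (fmap f x).
Proof.
move=> Kf [i xi]; exists i; rewrite fmapE.
have [f0 fK _] := steps_of_shrinking (Kf i).
by case: xi => ->; [left|right].
Qed.

Lemma boxarr_fmap K J f x y : shrinkings K J f -> bvalid K x -> bvalid K y ->
  boxarr K x y -> boxarr J (fmap f x) (fmap f y).
Proof.
move=> Kf Vx Vy [->|[i [xy_i Exy]]]; [by left | right; exists i].
rewrite !fmapE; split=> [|j ji]; last by rewrite !fmapE Exy.
by have [_ _ _ arrows] := Kf i; apply: arrows.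
Qed.

Lemma pair_map_comp K J f phi :
  pair_map g J phi -> shrinkings K J f -> pair_map g K (phi \o fmap f).
Proof.
case=> phi_arr phi_bd Kf; split=> [x y Vx Vy xy | x Vx bx] /=.
  by apply: phi_arr; [apply: bvalid_fmap Kf Vx | apply: bvalid_fmap Kf Vy | apply: boxarr_fmap].
by apply: phi_bd; [apply: bvalid_fmap Kf Vx | apply: boxbd_fmap].
Qed.

Lemma pair_map_eq K phi psi :
  pair_map g K phi -> (forall x, bvalid K x -> phi x = psi x) -> pair_map g K psi.
Proof.
case=> phi_arr phi_bd Ephi; split=> [x y Vx Vy xy | x Vx bx].
  by rewrite -!Ephi //; apply: phi_arr.
by rewrite -Ephi //; apply: phi_bd.
Qed.

Lemma homotopic_eq K phi psi :
  pair_map g K phi -> (forall x, bvalid K x -> phi x = psi x) -> homotopic g K phi psi.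
Proof.
move=> phiP Ephi; apply: rt_step; split=> //; first exact: pair_map_eq Ephi.
  by move=> x Vx _; apply: Ephi.
by left=> x Vx; rewrite Ephi //; apply: arr_refl.
Qed.

Lemma homotopic_comp K J f phi psi : shrinkings K J f ->
  homotopic g J phi psi -> homotopic g K (phi \o fmap f) (psi \o fmap f).
Proof.
move=> Kf; elim=> [phi1 phi2 [P1 P2 E12 arr12]|phi1|phi1 phi2 phi3 _ IH12 _ IH23].
- apply: rt_step; split; [exact: pair_map_comp P1 Kf | exact: pair_map_comp P2 Kf | |].
    by move=> x Vx bx /=; apply: E12; [apply: bvalid_fmap Kf Vx | apply: boxbd_fmap].
  by case: arr12 => arr12; [left|right] => x Vx; apply/arr12/bvalid_fmap/Vx.
- exact: rt_refl.
- exact: rt_trans IH12 IH23.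
Qed.

Lemma homotopic_eq_fmap K J f h phi : pair_map g J phi -> shrinkings K J f ->
  (forall i, f i =1 h i) -> homotopic g K (phi \o fmap f) (phi \o fmap h).
Proof.
move=> phiP Kf Efh; apply: homotopic_eq; first exact: pair_map_comp phiP Kf.
by move=> x _ /=; rewrite (eq_fmap Efh).
Qed.

Section OneCoordinate.

Variables (K J : 'I_n -> interval) (phi : {ffun 'I_n -> nat} -> G) (i0 : 'I_n).
Hypothesis phiP : pair_map g J phi.

Definition coord_set f s : 'I_n -> nat -> nat := fun j => if j == i0 then s else f j.

Lemma shrinkings_coord_set f s : shrinkings K J f ->
  shrinking (K i0) (J i0) s -> shrinkings K J (coord_set f s).
Proof. by move=> Kf Ks j; rewrite /coord_set; case: eqP => [->|]. Qed.

Lemma hstep_coord_set f s t : shrinkings K J f -> shr_hstep (K i0) (J i0) s t ->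
  hstep g K (phi \o fmap (coord_set f s)) (phi \o fmap (coord_set f t)).
Proof.
move=> Kf [Ks Kt arr_st]; have Kfs := shrinkings_coord_set Kf Ks.
have Kft := shrinkings_coord_set Kf Kt.
split; [exact: pair_map_comp phiP Kfs | exact: pair_map_comp phiP Kft | |].
  move=> x Vx bx /=.
  have at_g u : shrinkings K J (coord_set f u) -> phi (fmap (coord_set f u) x) = g.
    by move=> Ku; apply: (proj2 phiP); [apply: bvalid_fmap Ku Vx | apply: boxbd_fmap Ku bx].
  by rewrite !at_g.
have coord_arr (u v : nat -> nat) x : bvalid K x -> iarr (J i0) (u (x i0)) (v (x i0)) ->
    shrinkings K J (coord_set f u) -> shrinkings K J (coord_set f v) ->
    arr (phi (fmap (coord_set f u) x)) (phi (fmap (coord_set f v) x)).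
  move=> Vx uv Ku Kv; apply: (proj1 phiP); [exact: bvalid_fmap Ku Vx | exact: bvalid_fmap Kv Vx|].
  right; exists i0; rewrite !fmapE /coord_set eqxx; split=> // j ji.
  by rewrite !fmapE /coord_set (negbTE ji).
by case: arr_st => arr_st; [left|right] => x Vx; apply: coord_arr => //; apply: arr_st.
Qed.

Lemma homotopic_coord f f' : shrinkings K J f -> shrinkings K J f' ->
  (forall j, j != i0 -> f j =1 f' j) ->
  homotopic g K (phi \o fmap f) (phi \o fmap f').
Proof.
move=> Kf Kf' Eff'.
have set_homotopic s t : shr_homotopic (K i0) (J i0) s t ->
    homotopic g K (phi \o fmap (coord_set f s)) (phi \o fmap (coord_set f t)).
  elim=> [u v st|u|u v w _ IHuv _ IHvw].
  - by apply: rt_step; apply: hstep_coord_set.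
  - exact: rt_refl.
  - exact: rt_trans IHuv IHvw.
apply: (rt_trans _ _ _ (phi \o fmap (coord_set f (f i0)))).
  apply: homotopic_eq_fmap phiP Kf _ => j y; rewrite /coord_set.
  by case: eqVneq => [->|].
apply: (rt_trans _ _ _ (phi \o fmap (coord_set f (f' i0)))).
  exact: set_homotopic (shr_homotopic_all (Kf i0) (Kf' i0)).
apply: homotopic_eq_fmap phiP (shrinkings_coord_set Kf (Kf' i0)) _ => j y.
rewrite /coord_set.
by case: eqVneq => [->|ji] //; apply: Eff'.
Qed.

End OneCoordinate.

Lemma homotopic_shrinkings K J phi f f' : pair_map g J phi ->
  shrinkings K J f -> shrinkings K J f' -> homotopic g K (phi \o fmap f) (phi \o fmap f').
Proof.
move=> phiP Kf Kf'.
pose mix m : 'I_n -> nat -> nat := fun i => if i < m then f' i else f i.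
have Kmix m : shrinkings K J (mix m) by move=> i; rewrite /mix; case: ifP.
have mix_homotopic m : homotopic g K (phi \o fmap (mix 0)) (phi \o fmap (mix m)).
  elim: m => [|m IHm]; first exact: rt_refl.
  apply: (rt_trans _ _ _ _ _ IHm).
  have [lt_mn|le_nm] := ltnP m n.
    apply: (@homotopic_coord K J phi (Ordinal lt_mn) phiP) => // j jm y.
    have {}jm : nat_of_ord j != m by apply: contra jm => /eqP jm; apply/eqP/val_inj.
    by rewrite /mix ltnS [j <= m]leq_eqVlt (negbTE jm).
  apply: homotopic_eq_fmap phiP (Kmix m) _ => i y.
  by rewrite /mix !(leq_trans (ltn_ord i)) // ltnW.
apply: (rt_trans _ _ _ (phi \o fmap (mix 0))).
  by apply: homotopic_eq_fmap phiP Kf _ => i y; rewrite /mix ltn0.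
apply: (rt_trans _ _ _ _ _ (mix_homotopic n)).
by apply: homotopic_eq_fmap phiP (Kmix n) _ => i y; rewrite /mix ltn_ord.
Qed.

End Boxes.

Lemma crel_cvalid (G : digraph) (g : G) n (D : diagram n) (e e' : celem G D) :
  crel g e e' -> e = e' \/ cvalid g e /\ cvalid g e'.
Proof.
elim=> [e1 e2 [V1 V2 _] | e1 | e1 e2 _ IH | e1 e2 e3 _ IH12 _ IH23].
- by right; split.
- by left.
- by case: IH => [->|[V1 V2]]; [left | right; split].
- case: IH12 => [E12|[V1 V2]]; case: IH23 => [E23|[V2' V3]]; subst; by [left | right; split].
Qed.

Section SubdiagramProperties.

Variables (n : nat) (D : diagram n).

Definition shr_subdiagram : Prop := forall (a' a : dI D) f, dmor a' a f ->
  [/\ dobj a', dobj a & shrinkings (dtup a') (dtup a) f].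

Definition shr_cofinal : Prop :=
  forall J, exists2 a : dI D, dobj a & exists f, shrinkings (dtup a) J f.

Definition codirected : Prop := forall a b : dI D, dobj a -> dobj b ->
  exists c m1 m2, dmor c a m1 /\ dmor c b m2.

End SubdiagramProperties.

Section CofinalDiagram.

Variables (G : digraph) (g : G) (n : nat) (D : diagram n).
Implicit Types (E : celem G (Shr_diag n)) (e : celem G D).

Hypotheses (D_sub : shr_subdiagram D) (D_cofinal : shr_cofinal D).
Hypothesis D_codirected : codirected D.

Lemma crel_pullback a' m e : dmor a' e.1 m -> cvalid g e ->
  crel g e (a', e.2 \o fmap m).
Proof.
move=> a'm [Oe Pe]; have [Oa' _ Km] := D_sub a'm.
by apply: rst_step; split=> //; [split=> //; apply: pair_map_comp Pe Km | right; exists m].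
Qed.

Definition represents E e : Prop :=
  [/\ pair_map g E.1 E.2, dobj e.1 &
      exists2 f, shrinkings (dtup e.1) E.1 f &
        forall x, bvalid (dtup e.1) x -> e.2 x = E.2 (fmap f x)].

Lemma represents_cvalid E e : represents E e -> cvalid g e.
Proof.
case=> PE Oe [f Kf Ee]; split=> //.
by apply: pair_map_eq (pair_map_comp PE Kf) _ => x Vx; rewrite Ee.
Qed.

Lemma represents_exists E : cvalid g E -> exists e, represents E e.
Proof.
case=> _ PE; have [a Oa [f Kf]] := D_cofinal E.1.
by exists (a, E.2 \o fmap f); split=> //; exists f.
Qed.

Lemma represents_self e : cvalid g e -> represents (dtup e.1, e.2) e.
Proof.
case=> Oe Pe; split=> //.
by exists (fun _ => id) => [|x _]; [apply: shrinkings_id | rewrite fmap_id].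
Qed.

Lemma represents_pullback E e a' m :
  represents E e -> dmor a' e.1 m -> represents E (a', e.2 \o fmap m).
Proof.
case=> PE _ [f Kf Ee] a'm; have [Oa' _ Km] := D_sub a'm.
split=> //; exists (fun i => f i \o m i); first exact: shrinkings_comp Km Kf.
by move=> x Vx /=; rewrite Ee ?fmap_comp //; apply: bvalid_fmap Km Vx.
Qed.

Lemma represents_same_index E a phi psi :
  represents E (a, phi) -> represents E (a, psi) -> crel g (a, phi) (a, psi).
Proof.
move=> Ephi Epsi; have [Oa Pphi] := represents_cvalid Ephi.
have [_ Ppsi] := represents_cvalid Epsi.
case: Ephi Epsi => PE _ [f Kf /= Ef] [_ _ [f' Kf' /= Ef']].
apply: rst_step; split=> //; left; split=> //=.
apply: (rt_trans _ _ _ (E.2 \o fmap f)); first exact: homotopic_eq.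
apply: (rt_trans _ _ _ (E.2 \o fmap f')); first exact: homotopic_shrinkings PE Kf Kf'.
by apply: homotopic_eq (pair_map_comp PE Kf') _ => x Vx; rewrite Ef'.
Qed.

Lemma represents_unique E e e' : represents E e -> represents E e' -> crel g e e'.
Proof.
move=> Ee Ee'; have [_ Oe _] := Ee; have [_ Oe' _] := Ee'.
have [c [m [m' [cm cm']]]] := D_codirected Oe Oe'.
apply: (rst_trans _ _ _ _ _ (crel_pullback cm (represents_cvalid Ee))).
apply: (rst_trans _ _ _ _ _ _ (rst_sym _ _ _ _ (crel_pullback cm' (represents_cvalid Ee')))).
exact: represents_same_index (represents_pullback Ee cm) (represents_pullback Ee' cm').
Qed.

Lemma represents_cstep E E' e e' :
  cstep g E E' -> represents E e -> represents E' e' -> crel g e e'.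
Proof.
case: E E' => [J phi] [J' phi'] [_ [_ PJ'] [[/= EJ hom] | [h [/= Kh Eh]]]] Ee Ee'.
  subst J'; have Ve := represents_cvalid Ee; case: Ee => PJ Oe [f Kf Ef].
  apply: (rst_trans _ _ _ (e.1, phi' \o fmap f)); last first.
    by apply: represents_unique _ Ee'; split=> //; exists f.
  apply: rst_step; split=> //; first by split=> //; exact: pair_map_comp PJ' Kf.
  left; split=> //=; apply: (rt_trans _ _ _ (phi \o fmap f)).
    exact: homotopic_eq (proj2 Ve) Ef.
  exact: homotopic_comp Kf hom.
have [PJ _ _] := Ee; apply: represents_unique Ee _.
case: Ee' => _ Oe' [f' Kf' Ef']; split=> //.
exists (fun i => h i \o f' i); first exact: shrinkings_comp Kf' Kh.
by move=> x Vx /=; rewrite Ef' //= Eh ?fmap_comp //; apply: bvalid_fmap Kf' Vx.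
Qed.

Lemma represents_crel E E' : crel g E E' -> cvalid g E -> cvalid g E' ->
  forall e e', represents E e -> represents E' e' -> crel g e e'.
Proof.
elim=> {E E'} [E E' EE' | E | E E' _ IH | E E' E'' EE' IH1 _ IH2] VE VE' e e' Ee Ee'.
- exact: represents_cstep EE' Ee Ee'.
- exact: represents_unique Ee Ee'.
- exact/rst_sym/IH.
- have VE'' : cvalid g E' by case: (crel_cvalid EE') => [<-|[]].
  have [e'' Ee''] := represents_exists VE''.
  exact: rst_trans (IH1 _ _ _ _ Ee Ee'') (IH2 _ _ _ _ Ee'' Ee').
Qed.

Theorem canon_bijective_cofinal : @canon_bijective G g n D (Shr_diag n) (@dtup n D).
Proof.
split=> [E VE | e e' Ve Ve' ee'].
  have [e Ee] := represents_exists VE; exists e; first exact: represents_cvalid Ee.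
  apply: rst_sym; case: (Ee) => PE _ [f Kf Ef]; apply: rst_step; split=> //.
    by split=> //; case: (represents_cvalid Ee).
  by right; exists f.
have Ve1 : @cvalid G g n (Shr_diag n) (dtup e.1, e.2) by case: Ve.
have Ve1' : @cvalid G g n (Shr_diag n) (dtup e'.1, e'.2) by case: Ve'.
exact: represents_crel ee' Ve1 Ve1' _ _ (represents_self Ve) (represents_self Ve').
Qed.

End CofinalDiagram.

Section NiceSubcategory.

Variable S : nice_subcat.

Lemma nice_refinement (Js : seq interval) :
  exists2 L, sobj S L & forall J, J \in Js -> exists f, shrinking L J f.
Proof.
have [L refL] := common_refinement Js; have [L' OL' [k L'k]] := nice1 S L.
exists L' => // J /refL[f Lf]; exists (f \o k); exact: shrinking_comp L'k Lf.
Qed.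

Lemma nice_codirected A B : sobj S A -> sobj S B ->
  exists C m1 m2, smor S C A m1 /\ smor S C B m2.
Proof.
move=> OA OB; have [C OC refC] := nice_refinement [:: A; B].
have [m1 Cm1] := nice2 OA OC (refC A (mem_head _ _)).
have [m2 Cm2] := nice2 OB OC (refC B (mem_last A [:: B])).
by exists C, m1, m2.
Qed.

End NiceSubcategory.

Section ProductDiagram.

Variables (n : nat) (S : 'I_n -> nice_subcat).

Lemma prod_diag_subdiagram : shr_subdiagram (prod_diag S).
Proof. by move=> a' a f /= Sf; split=> i; case: (smor_shr (Sf i)). Qed.

Lemma prod_diag_cofinal : shr_cofinal (prod_diag S).
Proof.
move=> J; have /fin_all_exists2[/= a Oa Kf] i :
    exists2 K, sobj (S i) K & exists f, shrinking K (J i) f by apply: nice1.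
by have /fin_all_exists[f Kf'] := Kf; exists a => //; exists f.
Qed.

Lemma prod_diag_codirected : codirected (prod_diag S).
Proof.
move=> a b /= Oa Ob.
have /fin_all_exists[c /fin_all_exists[m1 /fin_all_exists[m2 cm]]] i :=
  nice_codirected (Oa i) (Ob i).
by exists c, m1, m2; split=> i; case: (cm i).
Qed.

End ProductDiagram.

Section DiagonalDiagram.

Variables (n : nat) (S : nice_subcat).

Lemma diag_diag_subdiagram : shr_subdiagram (diag_diag n S).
Proof.
by move=> a' a f /= [f0 Sf0 Ef]; have [? ? Kf0] := smor_shr Sf0; split=> // i; rewrite Ef.
Qed.

Lemma diag_diag_cofinal : shr_cofinal (diag_diag n S).
Proof.
move=> J; have [L OL refL] := nice_refinement S [seq J i | i <- enum 'I_n].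
have /fin_all_exists[f Lf] i : exists f, shrinking L (J i) f.
  by apply: refL; rewrite map_f ?mem_enum.
by exists L => //; exists f.
Qed.

Lemma diag_diag_codirected : codirected (diag_diag n S).
Proof.
move=> a b /= Oa Ob; have [c [m1 [m2 [cm1 cm2]]]] := nice_codirected Oa Ob.
by exists c, (fun=> m1), (fun=> m2); split; [exists m1 | exists m2].
Qed.

End DiagonalDiagram.

Theorem mainTheorem8 (G : digraph) (g : vtx G) (n : nat) :
  (forall S : 'I_n -> nice_subcat,
     @canon_bijective G g n (prod_diag S) (Shr_diag n) id)
  /\ (forall S : nice_subcat,
     @canon_bijective G g n (diag_diag n S) (Shr_diag n) (fun J _ => J)).
Proof.
split=> S; apply: canon_bijective_cofinal.
- exact: prod_diag_subdiagram.
- exact: prod_diag_cofinal.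
- exact: prod_diag_codirected.
- exact: diag_diag_subdiagram.
- exact: diag_diag_cofinal.
- exact: diag_diag_codirected.
Qed.
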